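(* Let $G$ be a finite graph with maximum degree $\Delta$, with edges ordered $e_1,\ldots,e_m$, let $\gamma>1$ be real, $K=\lceil(2+\gamma)(\Delta-1)\rceil$, $t$ a positive integer, and let the Procedure described in the context be run on $G$ with an input vector $F\in\{1,\ldots,\lceil\gamma(\Delta-1)\rceil\}^t$. Then for every step $i$ that is performed, the set $X_i$ of uncolored edges after step $i$ is uniquely determined by the record $(R_j)_{j\le i}$: if two input vectors $F,F'$ both perform step $i$ and produce the same records $R_j=R'_j$ for all $j\le i$, then $X_i=X'_i$.
   Context: Procedure. A partial edge-coloring assigns to some edges a color in $\{1,\ldots,K\}$; initially all edges are uncolored. Fix, for every edge $e$ and every $k\ge 3$, an enumeration (e.g. lexicographic) $C_1,\ldots,C_s$ of the cycles of length $2k$ of $G$ containing $e$. For $i=1,2,\ldots,t$: if no edge is uncolored, stop. Otherwise let $e_j=uv$ be the uncolored edge of smallest index. Let $S'$ be the set of colors appearing on edges $xy\neq uv$ such that (1) $x=u$ or $x=v$, or (2) edges $ux$ and $vy$ exist and have the same color; let $S=\{1,\ldots,K\}\setminus S'$ (one has $|S|\ge\lceil\gamma(\Delta-1)\rceil$). Color $e_j$ with the $F_i$-th smallest element of $S$. If this creates a cycle colored with only two colors (such a cycle has length $2k\ge 6$), choose one such cycle $C$ by a fixed deterministic rule, write it as $e_{i_1},e_{i_2},\ldots,e_{i_{2k}},e_{i_1}$ (consecutive edges) with $e_{i_1}=e_j$ and $i_2<i_{2k}$, uncolor all edges of $C$ except $e_{i_2}$ and $e_{i_3}$, and set $R_i=(k,\ell)$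 where $\ell$ is the index of $C$ in the fixed enumeration of cycles of length $2k$ containing $e_j$. Otherwise $R_i$ is empty. $X_i$ denotes the set of uncolored edges and $\Phi_i$ the partial coloring after step $i$. *)

From mathcomp Require Import all_boot all_order all_algebra.
From mathcomp Require Export reals.
Set Implicit Arguments. Unset Strict Implicit. Unset Printing Implicit Defensive.
Import Order.TTheory GRing.Theory Num.Theory.

(* A finite simple graph on the vertex type [T] whose edges are
   e_0, ..., e_{m-1} (the paper's e_1,...,e_m, in the same order):
   edge [i] has endpoints [src i] and [dst i]. *)
Section Graph.
Variables (T : finType) (m : nat) (src dst : 'I_m -> T).

Definition simple_graph : Prop :=
  (forall i, src i != dst i) /\
  (forall i j, [set src i; dst i] = [set src j; dst j] -> i = j).

Definition joins (a : 'I_m) (p q : T) : bool :=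
  ((src a == p) && (dst a == q)) || ((src a == q) && (dst a == p)).

Definition incident (a : 'I_m) (x : T) : bool := (src a == x) || (dst a == x).

Definition degree (x : T) : nat := #|[set a : 'I_m | incident a x]|.

Definition max_degree : nat := \max_(x : T) degree x.

Definition adjacent_edges (a b : 'I_m) : bool := incident a (src b) || incident a (dst b).

Definition is_cycle (L : nat) (C : {set 'I_m}) : Prop :=
  exists w : 'I_L -> T,
    [/\ 3 <= L, injective w,
        forall i : 'I_L, exists a, joins a (w i) (w (ordS i))
      & C = [set a | [exists i : 'I_L, joins a (w i) (w (ordS i))]]].

Definition coloring := 'I_m -> option nat.

Definition uncolored (phi : coloring) : {set 'I_m} := [set a | phi a == None].

Definition bichromatic (phi : coloring) (C : {set 'I_m}) : bool :=
  [forall a in C, phi a != None] && (size (undup [seq phi a | a in C]) <= 2).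

Variables (K : nat) (cyc_enum : 'I_m -> nat -> seq {set 'I_m})
          (rule : coloring -> seq (nat * nat) -> nat).

(* one step of the Procedure, with input value [f] (= F_i); [None] if stopped *)
Definition step (f : nat) (phi : coloring) : option (coloring * option (nat * nat)) :=
  match [seq a <- enum 'I_m | phi a == None] with
  | [::] => None
  | ej :: _ =>
    let u := src ej in let v := dst ej in
    let cond1 (a : 'I_m) := incident a u || incident a v in
    let cond2 (a : 'I_m) :=
      [exists x : T, exists y : T, [&& joins a x y &
        [exists b : 'I_m, exists c : 'I_m,
           [&& joins b u x, joins c v y, phi b != None & phi b == phi c]]]] in
    let forb (c : nat) :=
      [exists a : 'I_m, [&& a != ej, phi a == Some c & cond1 a || cond2 a]] in
    let S := [seq c <- iota 1 K | ~~ forb c] in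
    let col := nth 0 S f.-1 in
    let phi1 : coloring := fun a => if a == ej then Some col else phi a in
    let cands := [seq kl <- [seq (k, l) | k <- iota 3 #|T|,
                                          l <- iota 1 (size (cyc_enum ej k))]
                 | bichromatic phi1 (nth set0 (cyc_enum ej kl.1) kl.2.-1)] in
    match cands with
    | [::] => Some (phi1, None)
    | kl0 :: _ =>
      let kl := nth kl0 cands (rule phi1 cands) in
      let C := nth set0 (cyc_enum ej kl.1) kl.2.-1 in
      let i2 := head ej [seq a <- enum 'I_m |
                          [&& a \in C, a != ej & adjacent_edges a ej]] in
      let i3 := head ej [seq a <- enum 'I_m |
                          [&& a \in C, a != ej, a != i2 & adjacent_edges a i2]] in
      let phi2 : coloring :=
        fun a => if (a \in C) && (a \notin [:: i2; i3]) then None else phi1 a in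
      Some (phi2, Some kl)
    end
  end.

(* state after step [i] (steps 1..i, using F_1..F_i), together with the
   records R_1..R_i; [None] if step [i] is not performed. *)
Fixpoint run (F : seq nat) (i : nat) : option (coloring * seq (option (nat * nat))) :=
  match i with
  | 0 => Some ((fun _ => None), [::])
  | i'.+1 =>
    if i' < size F then
      match run F i' with
      | None => None
      | Some (phi, rs) =>
        match step (nth 0 F i') phi with
        | None => None
        | Some (phi', r) => Some (phi', rcons rs r)
        end
      end
    else None
  end.

End Graph.

From mathcomp Require Import all_boot all_order all_algebra.
Import Order.TTheory GRing.Theory Num.Theory.
Set Implicit Arguments. Unset Strict Implicit.

(* The edge e_j coloured at a step is the least uncoloured edge, and the
   edges uncoloured by the step are those of the cycle named by the record
   R_i = (k, l) in the enumeration for e_j, except e_{i_2}, e_{i_3}, which are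
   themselves determined by that cycle and e_j. Hence X_i is a function of
   X_{i-1} and R_i alone (the colours, and so F, never enter), and induction
   on i shows that X_i is a function of R_1, ..., R_i. *)

Section UncoloredDynamics.
Variables (T : finType) (m : nat) (src dst : 'I_m -> T) (K : nat)
  (cyc_enum : 'I_m -> nat -> seq {set 'I_m})
  (rule : coloring m -> seq (nat * nat) -> nat).

Definition cycle_uncolored (ej : 'I_m) (kl : nat * nat) : {set 'I_m} :=
  let C := nth set0 (cyc_enum ej kl.1) kl.2.-1 in
  let i2 := head ej [seq a <- enum 'I_m |
                      [&& a \in C, a != ej & adjacent_edges src dst a ej]] in
  let i3 := head ej [seq a <- enum 'I_m |
                      [&& a \in C, a != ej, a != i2 & adjacent_edges src dst a i2]] in
  [set a | (a \in C) && (a \notin [:: i2; i3])].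

Definition next_uncolored (X : {set 'I_m}) (r : option (nat * nat)) : {set 'I_m} :=
  match [seq a <- enum 'I_m | a \in X] with
  | [::] => X
  | ej :: _ =>
    if r is Some kl then (X :\ ej) :|: cycle_uncolored ej kl else X :\ ej
  end.

Lemma uncolored_step f phi phi' r :
  step src dst K cyc_enum rule f phi = Some (phi', r) ->
  uncolored phi' = next_uncolored (uncolored phi) r.
Proof.
have first_uncolored : [seq a <- enum 'I_m | a \in uncolored phi] =
                       [seq a <- enum 'I_m | phi a == None].
  by apply: eq_filter => a; rewrite inE.
rewrite /step /next_uncolored first_uncolored.
case: [seq a <- enum 'I_m | phi a == None] => [|ej _] //=.
(* [cs] is the list of bichromatic cycles created by colouring [ej]. *)
lazymatch goal with |- (match ?cs with _ => _ end = _) -> _ =>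
  case: cs => [|kl0 cands] end.
- case=> <- <-; apply/setP => a; rewrite !inE.
  by case: (a == ej).
- case=> <- <-; apply/setP => a; rewrite /cycle_uncolored !inE.
  by case: ifP => in_C; rewrite ?in_C ?orbT ?orbF //; case: (a == ej).
Qed.

Lemma uncolored_run_eq F F' i phi phi' rs rs' :
  run src dst K cyc_enum rule F i = Some (phi, rs) ->
  run src dst K cyc_enum rule F' i = Some (phi', rs') ->
  rs = rs' -> uncolored phi = uncolored phi'.
Proof.
elim: i phi phi' rs rs' => [|i IH] phi phi' rs rs' /=.
  by case=> <- _ [<- _].
case: ifP => // _; case: ifP => // _.
case E: (run _ _ _ _ _ F i) => [[psi qs]|] //.
case E': (run _ _ _ _ _ F' i) => [[psi' qs']|] //.
case S: (step _ _ _ _ _ _ psi) => [[chi r]|] //.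
case S': (step _ _ _ _ _ _ psi') => [[chi' r']|] //.
case=> <- <- [<- <-] /rcons_inj[eq_qs eq_r].
by rewrite (uncolored_step S) (uncolored_step S') eq_r (IH _ _ _ _ E E' eq_qs).
Qed.

End UncoloredDynamics.

Local Open Scope ring_scope.

Theorem lemma1 (R : realType) (T : finType) (m : nat) (src dst : 'I_m -> T)
    (cyc_enum : 'I_m -> nat -> seq {set 'I_m})
    (rule : coloring m -> seq (nat * nat) -> nat)
    (gamma : R) (K B t : nat) (F F' : seq nat) (i : nat)
    (phi phi' : coloring m) (rs rs' : seq (option (nat * nat))) :
  simple_graph src dst ->
  (forall (e : 'I_m) (k : nat), (3 <= k)%N ->
     uniq (cyc_enum e k) /\
     (forall C : {set 'I_m},
        C \in cyc_enum e k <-> is_cycle src dst (2 * k) C /\ e \in C)) ->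
  1 < gamma ->
  (K%:Z = Num.ceil ((2 + gamma) * ((max_degree src dst).-1)%:R))%R ->
  (B%:Z = Num.ceil (gamma * ((max_degree src dst).-1)%:R))%R ->
  (0 < t)%N ->
  size F = t -> all (fun f => (1 <= f <= B)%N) F ->
  size F' = t -> all (fun f => (1 <= f <= B)%N) F' ->
  (1 <= i)%N ->
  run src dst K cyc_enum rule F i = Some (phi, rs) ->
  run src dst K cyc_enum rule F' i = Some (phi', rs') ->
  rs = rs' ->
  uncolored phi = uncolored phi'.
Proof.
move=> _ _ _ _ _ _ _ _ _ _ _; exact: uncolored_run_eq.
Qed.
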